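(* There exists a last-use opaque history that does not avoid cascading aborts; namely, some last-use opaque history contains transactions $T_i\neq T_j$ such that $T_j$ reads from $T_i$ via a read that occurs before $T_i$ commits.
   Context: Standard TM model: transactions with operations $\mathit{init}_i$, $\mathit{read}_i(x)$, $\mathit{write}_i(x,v)$, $\mathit{tryC}_i$, $\mathit{tryA}_i$; well-formed histories with unique writes; variables with domain $\mathbb{N}_0$, initial value $0$. $T_j$ reads from $T_i$ if $H|T_i$ contains $w_i(x,v)\to ok_i$ and $H|T_j$ contains $r_j(x)\to v$ for some $x,v$. A history avoids cascading aborts (ACA) iff for all $T_i\neq T_j$ such that $T_j$ reads from $T_i$, $T_i$ commits before that read. Committed/aborted/live, completion, equivalence, real-time order $\prec_H$, sequential histories as usual. Sequential $S'$ legal iff for each $x$, every read in $S'|x$ returning a value returns the latest preceding written value (or $0$). $\mathrm{vis}(S,T_i)$: subhistory of $S$ of $S|T_j$ for $j=i$ or $T_j$ committed with $T_j\prec_S T_i$; $T_i$ legal iff $\mathrm{vis}$ legal. Last-use opacity (relative to the program producing $H$): $T_j$ is decided on $x$ if $H|T_j$ contains a complete write on $x$ (response $\ne A_j$) after which no producible extension of $H$ has another write invocation by $T_j$ on $x$; $S\Downarrow_C T_j$: $T_j$'s $\mathit{init}_j$ and operations on its decided variables followed by $\mathit{tryC}_j\to C_j$. A last-use view of $T_i$ in sequential $S$ contains $S|T_j$ if $j=i$ or $T_j$ committed with $T_j\prec_S T_i$; if $T_j$ not committed, decided on some variable, $T_j\prec_S T_i$ and not $T_j\prec_H T_i$, contains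 either $S\Downarrow_C T_j$ or nothing; otherwise nothing. $T_i$ last-use legal iff some last-use view legal. Finite $H$ final-state last-use opaque iff some sequential $S$ equivalent to a completion of $H$ preserves $\prec_H$, committed transactions legal and others last-use legal; $H$ last-use opaque iff every finite prefix is final-state last-use opaque. *)

From Stdlib Require Import List Arith Bool.
Import ListNotations.

Inductive op : Type :=
| OInit
| ORead (x : nat)
| OWrite (x v : nat)
| OTryC
| OTryA.

Inductive resp : Type :=
| ROk
| RVal (v : nat)
| RC
| RA.

Inductive event : Type :=
| Inv (t : nat) (o : op)
| Res (t : nat) (r : resp).

Definition history := list event.

Definition tx (e : event) : nat := match e with Inv t _ => t | Res t _ => t end.

Definition proj (H : history) (i : nat) : history :=
  filter (fun e => Nat.eqb (tx e) i) H.

Definition matches (o : op) (r : resp) : Prop :=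
  match o with
  | OInit => r = ROk
  | ORead _ => (exists v, r = RVal v) \/ r = RA
  | OWrite _ _ => r = ROk \/ r = RA
  | OTryC => r = RC \/ r = RA
  | OTryA => r = RA
  end.

Fixpoint wf_body (l : history) : Prop :=
  match l with
  | [] => True
  | [Inv _ o] => o <> OInit
  | Inv _ o :: Res _ r :: rest =>
      o <> OInit /\ matches o r /\ ((r = RC \/ r = RA) -> rest = []) /\ wf_body rest
  | _ => False
  end.

Definition wf_tx (i : nat) (l : history) : Prop :=
  l = [] \/ l = [Inv i OInit] \/
  exists rest, l = Inv i OInit :: Res i ROk :: rest /\ wf_body rest.

Definition unique_writes (H : history) : Prop :=
  forall p q t t' x v,
    nth_error H p = Some (Inv t (OWrite x v)) ->
    nth_error H q = Some (Inv t' (OWrite x v)) -> p = q.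

Definition well_formed (H : history) : Prop :=
  (forall i, wf_tx i (proj H i)) /\ unique_writes H.

Definition in_hist (H : history) (i : nat) : Prop := proj H i <> [].
Definition committed (H : history) (i : nat) : Prop := In (Res i RC) H.
Definition aborted (H : history) (i : nat) : Prop := In (Res i RA) H.
Definition live (H : history) (i : nat) : Prop :=
  in_hist H i /\ ~ committed H i /\ ~ aborted H i.

Definition prec (H : history) (i j : nat) : Prop :=
  i <> j /\ (committed H i \/ aborted H i) /\ in_hist H j /\
  forall p q e e', nth_error H p = Some e -> tx e = i ->
                   nth_error H q = Some e' -> tx e' = j -> p < q.

Definition compl_tx (H E : history) (i : nat) : Prop :=
  (live H i /\
   ((exists l, proj H i = l ++ [Inv i OTryC] /\
               (proj E i = [Res i RC] \/ proj E i = [Res i RA])) \/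
    (exists l o, proj H i = l ++ [Inv i o] /\ o <> OTryC /\ proj E i = [Res i RA]) \/
    (exists l r, proj H i = l ++ [Res i r] /\ proj E i = [Inv i OTryA; Res i RA])))
  \/ (~ live H i /\ proj E i = []).

Definition completion (H C : history) : Prop :=
  exists E, C = H ++ E /\ forall i, compl_tx H E i.

Definition equivalent (H S : history) : Prop := forall i, proj H i = proj S i.

Definition sequential (S : history) : Prop :=
  forall p q r e1 e2 e3, p < q -> q < r ->
    nth_error S p = Some e1 -> nth_error S q = Some e2 -> nth_error S r = Some e3 ->
    tx e1 = tx e3 -> tx e2 = tx e1.

(** value of the latest complete write w(x,w) -> ok in l, or [acc] if none *)
Fixpoint lastw (x : nat) (l : history) (acc : nat) : nat :=
  match l with
  | [] => acc
  | Inv t (OWrite y w) :: rest =>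
      lastw x rest (match rest with
                    | Res t' ROk :: _ => if Nat.eqb y x && Nat.eqb t t' then w else acc
                    | _ => acc
                    end)
  | _ :: rest => lastw x rest acc
  end.

Definition legal (S : history) : Prop :=
  forall p t x v,
    nth_error S p = Some (Inv t (ORead x)) ->
    nth_error S (Nat.succ p) = Some (Res t (RVal v)) ->
    v = lastw x (firstn p S) 0.

Definition vis_legal (S : history) (i : nat) : Prop :=
  exists f : nat -> bool,
    (forall j, f j = true <-> (j = i \/ (committed S j /\ prec S j i))) /\
    legal (filter (fun e => f (tx e)) S).

(** A program is represented by the set of histories it can produce:
    prefix-closed and consisting of well-formed histories. *)
Definition program (P : history -> Prop) : Prop :=
  (forall H, P H -> well_formed H) /\ (forall H E, P (H ++ E) -> P H).

Definition decided (P : history -> Prop) (H : history) (j x : nat) : Prop :=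
  exists k v r,
    nth_error (proj H j) k = Some (Inv j (OWrite x v)) /\
    nth_error (proj H j) (Nat.succ k) = Some (Res j r) /\ r <> RA /\
    forall H', P H' -> (exists E, H' = H ++ E) ->
      forall k' w, k < k' -> nth_error (proj H' j) k' = Some (Inv j (OWrite x w)) -> False.

Definition keep (d : nat -> bool) (o : op) : bool :=
  match o with
  | OInit => true
  | ORead x => d x
  | OWrite x _ => d x
  | _ => false
  end.

Fixpoint keepops (d : nat -> bool) (l : history) : history :=
  match l with
  | Inv t o :: Res t' r :: rest =>
      (if keep d o then [Inv t o; Res t' r] else []) ++ keepops d rest
  | _ :: rest => keepops d rest
  | [] => []
  end.

(** S ⇓_C T_j, where [d] decides T_j's decided variables *)
Definition downC (d : nat -> bool) (j : nat) (l : history) : history :=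
  keepops d l ++ [Inv j OTryC; Res j RC].

Inductive vkind : Type := VFull | VCut | VNone.

Definition lu_legal (P : history -> Prop) (H S : history) (i : nat) : Prop :=
  exists (order : list nat) (g : nat -> vkind) (d : nat -> nat -> bool),
    NoDup order /\ S = concat (map (proj S) order) /\
    (forall j x, d j x = true <-> decided P H j x) /\
    (forall j, (j = i \/ (committed S j /\ prec S j i)) -> g j = VFull) /\
    (forall j, j <> i -> ~ committed S j -> (exists x, decided P H j x) ->
               prec S j i -> ~ prec H j i -> g j = VCut \/ g j = VNone) /\
    (forall j, ~ (j = i \/ (committed S j /\ prec S j i)) ->
               ~ (j <> i /\ ~ committed S j /\ (exists x, decided P H j x) /\
                  prec S j i /\ ~ prec H j i) -> g j = VNone) /\
    legal (concat (map (fun j => match g j with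
                                 | VFull => proj S j
                                 | VCut => downC (d j) j (proj S j)
                                 | VNone => []
                                 end) order)).

Definition final_state_lu_opaque (P : history -> Prop) (H : history) : Prop :=
  exists C S, completion H C /\ sequential S /\ equivalent C S /\
    (forall i j, prec H i j -> prec S i j) /\
    (forall i, committed S i -> vis_legal S i) /\
    (forall i, in_hist S i -> ~ committed S i -> lu_legal P H S i).

Definition lu_opaque (P : history -> Prop) (H : history) : Prop :=
  forall k, final_state_lu_opaque P (firstn k H).

Definition write_ok (H : history) (i x v : nat) : Prop :=
  exists k, nth_error (proj H i) k = Some (Inv i (OWrite x v)) /\
            nth_error (proj H i) (Nat.succ k) = Some (Res i ROk).

Definition read_at (H : history) (j x v q p : nat) : Prop :=
  q < p /\ nth_error H q = Some (Inv j (ORead x)) /\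
  nth_error H p = Some (Res j (RVal v)) /\
  forall m e, q < m -> m < p -> nth_error H m = Some e -> tx e <> j.

Definition ACA (H : history) : Prop :=
  forall i j x v q p, i <> j -> write_ok H i x v -> read_at H j x v q p ->
    exists c, c < p /\ nth_error H c = Some (Res i RC).

From Stdlib Require Import List Arith Bool Lia ClassicalEpsilon.
Import ListNotations.

(* [T_1] writes 1 to [x] and never writes [x] again, so it is decided on [x];
   while [T_1] is still live, [T_2] reads 1 from [x], which already violates ACA.
   For last-use opacity, every prefix is completed by aborting all live
   transactions and serialized as [T_1] then [T_2].  Until [T_2]'s read returns,
   no transaction has observed a value, so each view may consist of the
   transaction alone.  Afterwards the view of [T_2] may contain [T_1 ⇓_C]
   ([T_1]'s init and write followed by a commit), in which reading 1 is legal;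
   this is allowed because [T_1] precedes [T_2] in the serialization but not in
   real time. *)

Lemma In_proj L i e : In e (proj L i) <-> In e L /\ tx e = i.
Proof. unfold proj. now rewrite filter_In, Nat.eqb_eq. Qed.

Lemma proj_tx L i : Forall (fun e => tx e = i) (proj L i).
Proof. apply Forall_forall. intros e He. now apply In_proj in He. Qed.

Lemma proj_app L1 L2 i : proj (L1 ++ L2) i = proj L1 i ++ proj L2 i.
Proof. apply filter_app. Qed.

Lemma proj_block l j i :
  Forall (fun e => tx e = j) l -> proj l i = if Nat.eqb j i then l else [].
Proof.
  unfold proj. intros Hl. induction Hl as [|e l He _ IH]; simpl.
  - now destruct Nat.eqb.
  - rewrite He, IH. now destruct (Nat.eqb j i).
Qed.

Lemma proj_outside L ts i :
  Forall (fun e => In (tx e) ts) L -> ~ In i ts -> proj L i = [].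
Proof.
  intros HL Hi. destruct (proj L i) as [|e l] eqn:Hp; [reflexivity|].
  assert (He : In e (proj L i)) by (rewrite Hp; left; reflexivity).
  apply In_proj in He as [He <-]. rewrite Forall_forall in HL.
  now exfalso; apply Hi, HL.
Qed.

Lemma proj_flat_map_blocks (f : nat -> history) ts i :
  NoDup ts -> (forall j, Forall (fun e => tx e = j) (f j)) ->
  proj (flat_map f ts) i = if in_dec Nat.eq_dec i ts then f i else [].
Proof.
  intros Hnd Hf. induction Hnd as [|a ts Ha _ IH]; [reflexivity|].
  cbn [flat_map]. rewrite proj_app, (proj_block _ a) by apply Hf. rewrite IH.
  destruct (Nat.eqb_spec a i) as [<-|Hai].
  - destruct (in_dec Nat.eq_dec a ts); [contradiction|].
    destruct (in_dec Nat.eq_dec a (a :: ts)) as [_|Hn].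
    + apply app_nil_r.
    + now exfalso; apply Hn; left.
  - destruct (in_dec Nat.eq_dec i ts) as [Hi|Hi],
      (in_dec Nat.eq_dec i (a :: ts)) as [Hi'|Hi']; try reflexivity.
    + now exfalso; apply Hi'; right.
    + now destruct Hi' as [Hia|Hia]; [contradiction|].
Qed.

Lemma In_firstn {A} k l (a : A) : In a (firstn k l) -> In a l.
Proof. intros Ha. rewrite <- (firstn_skipn k l). apply in_or_app. now left. Qed.

Lemma Forall_firstn {A} (Q : A -> Prop) k l : Forall Q l -> Forall Q (firstn k l).
Proof.
  intros Hl. rewrite <- (firstn_skipn k l) in Hl. now apply Forall_app in Hl.
Qed.

(** * Completing by aborting every transaction *)

Definition terminating (e : event) : bool :=
  match e with
  | Inv _ OTryC | Inv _ OTryA | Res _ RC | Res _ RA => true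
  | _ => false
  end.

Definition nonterminating (L : history) : Prop :=
  forall e, In e L -> terminating e = false.

Definition abort_tx (L : history) (i : nat) : history :=
  match rev (proj L i) with
  | [] => []
  | Inv _ _ :: _ => [Res i RA]
  | Res _ _ :: _ => [Inv i OTryA; Res i RA]
  end.

Definition abort_all (ts : list nat) (L : history) : history :=
  flat_map (abort_tx L) ts.

Lemma abort_tx_tx L i : Forall (fun e => tx e = i) (abort_tx L i).
Proof. unfold abort_tx. destruct (rev (proj L i)) as [|[] _]; repeat constructor. Qed.

Lemma In_abort_all ts L e :
  In e (abort_all ts L) ->
  In (tx e) ts /\ (e = Inv (tx e) OTryA \/ e = Res (tx e) RA).
Proof.
  unfold abort_all. rewrite in_flat_map. intros [i [Hi He]].
  pose proof (proj1 (Forall_forall _ _) (abort_tx_tx L i) e He) as <-.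
  split; [exact Hi|].
  unfold abort_tx in He. destruct (rev (proj L (tx e))) as [|[] _];
    simpl in He; intuition.
Qed.

Lemma nonterminating_not_committed L i : nonterminating L -> ~ committed L i.
Proof. intros Hnt Hc. exact (diff_true_false (Hnt _ Hc)). Qed.

Lemma nonterminating_not_aborted L i : nonterminating L -> ~ aborted L i.
Proof. intros Hnt Ha. exact (diff_true_false (Hnt _ Ha)). Qed.

Lemma nonterminating_not_prec L i j : nonterminating L -> ~ prec L i j.
Proof.
  intros Hnt [_ [[Hc|Ha] _]].
  - exact (nonterminating_not_committed _ _ Hnt Hc).
  - exact (nonterminating_not_aborted _ _ Hnt Ha).
Qed.

Lemma compl_tx_abort_tx L E i :
  nonterminating L -> proj E i = abort_tx L i -> compl_tx L E i.
Proof.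
  intros Hnt HE. unfold compl_tx. rewrite HE. unfold abort_tx.
  destruct (rev (proj L i)) as [|e r] eqn:Hr.
  - right. split; [|reflexivity]. intros [Hin _]. apply Hin.
    now rewrite <- (rev_involutive (proj L i)), Hr.
  - assert (Hp : proj L i = rev r ++ [e])
      by now rewrite <- (rev_involutive (proj L i)), Hr.
    assert (Hlive : live L i).
    { split; [|split; [apply nonterminating_not_committed | apply nonterminating_not_aborted]];
        auto.
      unfold in_hist. rewrite Hp. now destruct (rev r). }
    assert (He : In e L /\ tx e = i)
      by (apply In_proj; rewrite Hp; apply in_or_app; right; left; reflexivity).
    left. split; [exact Hlive|].
    destruct e as [t o|t r']; destruct He as [HeL Ht]; simpl in Ht; subst t.
    + right; left. exists (rev r), o. repeat split; [exact Hp|]. intros ->.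
      exact (diff_true_false (Hnt _ HeL)).
    + right; right. now exists (rev r), r'.
Qed.

Lemma completion_abort_all L ts :
  NoDup ts -> nonterminating L -> Forall (fun e => In (tx e) ts) L ->
  completion L (L ++ abort_all ts L).
Proof.
  intros Hnd Hnt HL. exists (abort_all ts L). split; [reflexivity|].
  intro i. apply compl_tx_abort_tx; [exact Hnt|].
  unfold abort_all. rewrite proj_flat_map_blocks by auto using abort_tx_tx.
  destruct (in_dec Nat.eq_dec i ts) as [|Hi]; [reflexivity|].
  unfold abort_tx. now rewrite (proj_outside _ _ _ HL Hi).
Qed.

(** * Serializing transaction by transaction *)

Definition serialize (ts : list nat) (C : history) : history := flat_map (proj C) ts.

Lemma In_serialize ts C e : In e (serialize ts C) <-> In e C /\ In (tx e) ts.
Proof.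
  unfold serialize. rewrite in_flat_map. split.
  - intros [j [Hj He]]. apply In_proj in He as [He <-]. now split.
  - intros [He Hts]. exists (tx e). now rewrite In_proj.
Qed.

Lemma proj_serialize ts C i :
  NoDup ts -> proj (serialize ts C) i = if in_dec Nat.eq_dec i ts then proj C i else [].
Proof. intros Hnd. apply proj_flat_map_blocks; auto using proj_tx. Qed.

Lemma serialize_equivalent ts C :
  NoDup ts -> Forall (fun e => In (tx e) ts) C -> equivalent C (serialize ts C).
Proof.
  intros Hnd HC i. rewrite proj_serialize by exact Hnd.
  destruct (in_dec Nat.eq_dec i ts) as [|Hi]; [reflexivity|].
  exact (proj_outside _ _ _ HC Hi).
Qed.

Lemma serialize_blocks ts C :
  NoDup ts -> serialize ts C = concat (map (proj (serialize ts C)) ts).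
Proof.
  intros Hnd. unfold serialize at 1. rewrite flat_map_concat_map. f_equal.
  apply map_ext_in. intros j Hj. rewrite proj_serialize by exact Hnd.
  now destruct (in_dec Nat.eq_dec j ts).
Qed.

Lemma serialize_tx_other ts C a :
  ~ In a ts -> Forall (fun e => tx e <> a) (serialize ts C).
Proof.
  intros Ha. apply Forall_forall. intros e He Hea.
  apply In_serialize in He as [_ Hin]. rewrite Hea in Hin. contradiction.
Qed.

Lemma nth_app_block A B a p e :
  Forall (fun e => tx e = a) A -> Forall (fun e => tx e <> a) B ->
  nth_error (A ++ B) p = Some e -> (tx e = a <-> p < length A).
Proof.
  rewrite !Forall_forall. intros HA HB Hp.
  destruct (Nat.lt_ge_cases p (length A)) as [Hl|Hl].
  - rewrite nth_error_app1 in Hp by exact Hl.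
    split; [intros _; exact Hl|]. intros _. apply HA. eapply nth_error_In; eauto.
  - rewrite nth_error_app2 in Hp by exact Hl.
    split; [|lia]. intros Ha. exfalso. apply (HB e); [eapply nth_error_In; eauto|exact Ha].
Qed.

Lemma sequential_app_block A B a :
  Forall (fun e => tx e = a) A -> Forall (fun e => tx e <> a) B ->
  sequential B -> sequential (A ++ B).
Proof.
  intros HA HB HBseq p q r e1 e2 e3 Hpq Hqr H1 H2 H3 Heq.
  pose proof (nth_app_block _ _ _ _ _ HA HB H1) as B1.
  pose proof (nth_app_block _ _ _ _ _ HA HB H2) as B2.
  pose proof (nth_app_block _ _ _ _ _ HA HB H3) as B3.
  destruct (Nat.lt_ge_cases p (length A)) as [Hp|Hp].
  - assert (Ha1 : tx e1 = a) by now apply B1.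
    assert (Ha3 : tx e3 = a) by congruence.
    rewrite Ha1. apply B2. apply B3 in Ha3. lia.
  - rewrite nth_error_app2 in H1, H2, H3 by lia.
    apply (HBseq (p - length A) (q - length A) (r - length A) e1 e2 e3); auto; lia.
Qed.

Lemma sequential_serialize ts C : NoDup ts -> sequential (serialize ts C).
Proof.
  induction 1 as [|a ts Ha _ IH].
  - intros p q r e1 e2 e3 _ _ H1. now destruct p.
  - change (serialize (a :: ts) C) with (proj C a ++ serialize ts C).
    apply (sequential_app_block _ _ a); auto using proj_tx, serialize_tx_other.
Qed.

Lemma prec_serialize_head a ts C j :
  ~ In a ts -> a <> j ->
  committed (serialize (a :: ts) C) a \/ aborted (serialize (a :: ts) C) a ->
  in_hist (serialize (a :: ts) C) j ->
  prec (serialize (a :: ts) C) a j.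
Proof.
  intros Ha Haj Hend Hj. repeat split; auto.
  intros p q e e' Hp Hpa Hq Hqj.
  pose proof (serialize_tx_other ts C a Ha) as HB.
  apply (nth_app_block _ _ _ _ _ (proj_tx C a) HB) in Hp, Hq.
  apply Hp in Hpa. destruct (Nat.lt_ge_cases q (length (proj C a))) as [Hq'|]; [|lia].
  apply Hq in Hq'. congruence.
Qed.

Definition abort_serialization (ts : list nat) (L : history) : history :=
  serialize ts (L ++ abort_all ts L).

Lemma abort_serialization_not_committed ts L j :
  nonterminating L -> ~ committed (abort_serialization ts L) j.
Proof.
  intros Hnt Hc. apply In_serialize in Hc as [Hc _].
  apply in_app_or in Hc as [Hc|Hc].
  - exact (diff_true_false (Hnt _ Hc)).
  - apply In_abort_all in Hc as [_ [Hc|Hc]]; discriminate.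
Qed.

Lemma In_abort_serialization_read ts L t v :
  In (Res t (RVal v)) (abort_serialization ts L) -> In (Res t (RVal v)) L.
Proof.
  intros He. apply In_serialize in He as [He _].
  apply in_app_or in He as [He|He]; [exact He|].
  apply In_abort_all in He as [_ [He|He]]; discriminate.
Qed.

Lemma final_state_of_abort_serialization P L ts :
  NoDup ts -> nonterminating L -> Forall (fun e => In (tx e) ts) L ->
  (forall i, lu_legal P L (abort_serialization ts L) i) ->
  final_state_lu_opaque P L.
Proof.
  intros Hnd Hnt HL Hlu. exists (L ++ abort_all ts L), (abort_serialization ts L).
  split; [exact (completion_abort_all _ _ Hnd Hnt HL)|].
  split; [exact (sequential_serialize _ _ Hnd)|].
  split.
  { apply serialize_equivalent; [exact Hnd|]. apply Forall_app. split; [exact HL|].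
    apply Forall_forall. intros e He. now apply In_abort_all in He. }
  split; [intros i j Hp; exfalso; exact (nonterminating_not_prec _ _ _ Hnt Hp)|].
  split; [intros i Hc; exfalso; exact (abort_serialization_not_committed _ _ _ Hnt Hc)|].
  intros i _ _. apply Hlu.
Qed.

Definition read_free (L : history) : Prop := forall t v, ~ In (Res t (RVal v)) L.

Lemma legal_of_read_free L : read_free L -> legal L.
Proof.
  intros Hrf p t x v _ Hres. exfalso. exact (Hrf t v (nth_error_In _ _ Hres)).
Qed.

Definition legalb (L : history) : bool :=
  forallb (fun p => match nth_error L p, nth_error L (Nat.succ p) with
                    | Some (Inv t (ORead x)), Some (Res t' (RVal v)) =>
                        negb (Nat.eqb t t') || Nat.eqb v (lastw x (firstn p L) 0)
                    | _, _ => true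
                    end) (seq 0 (length L)).

Lemma legalb_sound L : legalb L = true -> legal L.
Proof.
  intros Hb p t x v Hp Hs. unfold legalb in Hb. rewrite forallb_forall in Hb.
  assert (Hlt : p < length L) by (apply nth_error_Some; congruence).
  specialize (Hb p (proj2 (in_seq _ _ _) (conj (Nat.le_0_l p) Hlt))).
  cbv beta in Hb. rewrite Hp, Hs, Nat.eqb_refl in Hb.
  now apply Nat.eqb_eq.
Qed.

Definition decidedb (P : history -> Prop) (H : history) (j x : nat) : bool :=
  if excluded_middle_informative (decided P H j x) then true else false.

Lemma decidedb_spec P H j x : decidedb P H j x = true <-> decided P H j x.
Proof. unfold decidedb. destruct excluded_middle_informative; split; congruence. Qed.

Definition view_kind (i : nat) (cut : nat -> bool) (j : nat) : vkind :=
  if Nat.eqb j i then VFull else if cut j then VCut else VNone.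

Definition last_use_view (S : history) (order : list nat) (g : nat -> vkind)
    (d : nat -> nat -> bool) : history :=
  concat (map (fun j => match g j with
                        | VFull => proj S j
                        | VCut => downC (d j) j (proj S j)
                        | VNone => []
                        end) order).

(** Without committed transactions, the only freedom left in a last-use view is
    which eligible [T_j] contribute [S ⇓_C T_j]. *)
Lemma lu_legal_of_cuts P H S order i (cut : nat -> bool) :
  NoDup order -> S = concat (map (proj S) order) -> (forall j, ~ committed S j) ->
  (forall j, cut j = true ->
     j <> i /\ (exists x, decided P H j x) /\ prec S j i /\ ~ prec H j i) ->
  legal (last_use_view S order (view_kind i cut) (decidedb P H)) ->
  lu_legal P H S i.
Proof.
  intros Hnd HS Hnc Hcut Hl. exists order, (view_kind i cut), (decidedb P H).
  unfold view_kind.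
  repeat split; auto using decidedb_spec; try apply decidedb_spec.
  - intros j [->|[Hc _]]; [now rewrite Nat.eqb_refl|now exfalso; apply (Hnc j)].
  - intros j Hj _ _ _ _. apply Nat.eqb_neq in Hj. rewrite Hj. destruct (cut j); auto.
  - intros j Hfull Helig. destruct (Nat.eqb_spec j i) as [->|_].
    + exfalso. apply Hfull. now left.
    + destruct (cut j) eqn:Hc; [|reflexivity]. exfalso. apply Helig.
      destruct (Hcut j Hc) as (Hji & Hx & Hp & Hnp).
      exact (conj Hji (conj (Hnc j) (conj Hx (conj Hp Hnp)))).
Qed.

Lemma legal_view_alone S order i d :
  read_free (proj S i) -> legal (last_use_view S order (view_kind i (fun _ => false)) d).
Proof.
  intros Hrf. apply legal_of_read_free. intros t v He.
  apply in_concat in He as [l [Hl He]]. apply in_map_iff in Hl as [j [Hj _]].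
  subst l. unfold view_kind in He.
  destruct (Nat.eqb j i) eqn:Hji; [apply Nat.eqb_eq in Hji; subst j|contradiction].
  exact (Hrf t v He).
Qed.

Lemma decided_at_maximal P H j x k v r :
  (forall E, P (H ++ E) -> E = []) ->
  nth_error (proj H j) k = Some (Inv j (OWrite x v)) ->
  nth_error (proj H j) (S k) = Some (Res j r) -> r <> RA ->
  (forall k' w, k < k' -> nth_error (proj H j) k' <> Some (Inv j (OWrite x w))) ->
  decided P H j x.
Proof.
  intros Hmax Hw Hr HrA Hlast. exists k, v, r. repeat split; auto.
  intros H' HP [E ->] k' w Hk Hn. rewrite (Hmax E HP), app_nil_r in Hn.
  exact (Hlast k' w Hk Hn).
Qed.

(** * Programs producing the prefixes of a history *)

Definition prefixes (L H : history) : Prop := exists k, H = firstn k L.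

Lemma prefixes_maximal L E : prefixes L (L ++ E) -> E = [].
Proof.
  intros [k Hk]. apply (f_equal (@length _)) in Hk.
  rewrite length_app, length_firstn in Hk. destruct E; [reflexivity|simpl in Hk; lia].
Qed.

Lemma proj_firstn L i k : exists k', proj (firstn k L) i = firstn k' (proj L i).
Proof.
  revert k. induction L as [|e L IH]; intros [|k].
  - now exists 0.
  - now exists 0.
  - now exists 0.
  - destruct (IH k) as [k' Hk']. unfold proj in *. simpl.
    destruct (Nat.eqb (tx e) i); [exists (S k')|exists k']; simpl; now rewrite Hk'.
Qed.

Lemma wf_body_firstn n l : wf_body l -> wf_body (firstn n l).
Proof.
  revert l. induction n as [n IH] using (well_founded_induction lt_wf). intros l Hl.
  destruct n as [|[|n]]; [exact I| |].
  - destruct l as [|[t o|t r] rest]; simpl in *; [exact I| |contradiction].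
    destruct rest as [|[|t' r] rest]; [exact Hl|contradiction|exact (proj1 Hl)].
  - destruct l as [|[t o|t r] [|[t' o'|t' r'] rest]]; simpl in *; try contradiction;
      try exact I; [exact Hl|].
    destruct Hl as (Ho & Hm & Hend & Hrest). split; [exact Ho|]. split; [exact Hm|]. split.
    + intros Hr. rewrite (Hend Hr). apply firstn_nil.
    + apply IH; [lia|exact Hrest].
Qed.

Lemma wf_tx_firstn i n l : wf_tx i l -> wf_tx i (firstn n l).
Proof.
  intros [->|[->|[rest [-> Hrest]]]].
  - left. apply firstn_nil.
  - destruct n; [left|right; left]; simpl; now rewrite ?firstn_nil.
  - destruct n as [|[|n]]; [left; reflexivity|right; left; reflexivity|].
    right; right. exists (firstn n rest). split; [reflexivity|].
    now apply wf_body_firstn.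
Qed.

Lemma unique_writes_firstn L k : unique_writes L -> unique_writes (firstn k L).
Proof.
  intros Hu p q t t' x v Hp Hq. rewrite nth_error_firstn in Hp, Hq.
  destruct (Nat.ltb p k), (Nat.ltb q k); try discriminate. eapply Hu; eauto.
Qed.

Lemma well_formed_firstn L k : well_formed L -> well_formed (firstn k L).
Proof.
  intros [Hwf Hu]. split; [|now apply unique_writes_firstn].
  intro i. destruct (proj_firstn L i k) as [k' ->]. apply wf_tx_firstn, Hwf.
Qed.

Lemma program_prefixes L : well_formed L -> program (prefixes L).
Proof.
  intros Hwf. split.
  - intros H [k ->]. now apply well_formed_firstn.
  - intros H E [k Hk]. exists (Nat.min (length H) k).
    rewrite <- firstn_firstn, <- Hk, firstn_app, firstn_all, Nat.sub_diag.
    simpl. now rewrite app_nil_r.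
Qed.

Lemma not_ACA_of_dirty_read H i j x v q p :
  i <> j -> write_ok H i x v -> read_at H j x v q p ->
  (forall c, c < p -> nth_error H c <> Some (Res i RC)) -> ~ ACA H.
Proof.
  intros Hij Hw Hr Hnc Haca. destruct (Haca i j x v q p Hij Hw Hr) as [c [Hc Hn]].
  exact (Hnc c Hc Hn).
Qed.

Definition dirty_read_history : history :=
  [Inv 1 OInit; Res 1 ROk; Inv 1 (OWrite 0 1); Res 1 ROk;
   Inv 2 OInit; Res 2 ROk; Inv 2 (ORead 0); Res 2 (RVal 1)].

Definition dirty_read_program : history -> Prop := prefixes dirty_read_history.

Lemma NoDup_dirty_read_tx_ids : NoDup [1; 2].
Proof. repeat constructor; simpl; intuition discriminate. Qed.

Lemma dirty_read_well_formed : well_formed dirty_read_history.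
Proof.
  split.
  - intros [|[|[|i]]]; unfold wf_tx; vm_compute proj; try (left; reflexivity);
      right; right; eexists; split; try reflexivity; simpl;
      repeat split; try discriminate; try (intros [Hr|Hr]; discriminate); left; eauto.
  - assert (Hw : forall p t x v,
               nth_error dirty_read_history p = Some (Inv t (OWrite x v)) -> p = 2).
    { intros p t x v Hp.
      do 8 (destruct p as [|p]; [simpl in Hp; first [discriminate Hp|reflexivity]|]).
      now destruct p. }
    intros p q t t' x v Hp Hq. now rewrite (Hw _ _ _ _ Hp), (Hw _ _ _ _ Hq).
Qed.

Lemma dirty_read_nonterminating k : nonterminating (firstn k dirty_read_history).
Proof.
  intros e He. apply In_firstn in He. simpl in He. intuition (subst; reflexivity).
Qed.

Lemma dirty_read_tx_ids k :
  Forall (fun e => In (tx e) [1; 2]) (firstn k dirty_read_history).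
Proof.
  apply Forall_firstn, Forall_forall. intros e He. simpl in He.
  intuition (subst; simpl; auto).
Qed.

Lemma dirty_read_response k t v :
  In (Res t (RVal v)) (firstn k dirty_read_history) -> 8 <= k /\ t = 2.
Proof.
  intros He. apply In_nth_error in He as [p Hp]. rewrite nth_error_firstn in Hp.
  destruct (Nat.ltb_spec p k) as [Hpk|]; [|discriminate].
  do 8 (destruct p as [|p]; [simpl in Hp; first [discriminate Hp|injection Hp; lia]|]).
  now destruct p.
Qed.

Lemma dirty_read_write_decided : decided dirty_read_program dirty_read_history 1 0.
Proof.
  apply (decided_at_maximal _ _ _ _ 2 1 ROk); try reflexivity; try discriminate.
  - apply prefixes_maximal.
  - intros [|[|[|[|k']]]] w Hk; [lia..|discriminate|now destruct k'].
Qed.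

Lemma dirty_read_serialization :
  abort_serialization [1; 2] dirty_read_history =
  [Inv 1 OInit; Res 1 ROk; Inv 1 (OWrite 0 1); Res 1 ROk; Inv 1 OTryA; Res 1 RA;
   Inv 2 OInit; Res 2 ROk; Inv 2 (ORead 0); Res 2 (RVal 1); Inv 2 OTryA; Res 2 RA].
Proof. reflexivity. Qed.

Lemma dirty_read_reader_lu_legal :
  lu_legal dirty_read_program dirty_read_history
    (abort_serialization [1; 2] dirty_read_history) 2.
Proof.
  apply (lu_legal_of_cuts _ _ _ [1; 2] _ (Nat.eqb 1)).
  - exact NoDup_dirty_read_tx_ids.
  - exact (serialize_blocks _ _ NoDup_dirty_read_tx_ids).
  - intros j. apply abort_serialization_not_committed, (dirty_read_nonterminating 8).
  - intros j Hj. apply Nat.eqb_eq in Hj as <-.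
    split; [discriminate|]. split; [exists 0; exact dirty_read_write_decided|].
    split; [|apply (nonterminating_not_prec _ _ _ (dirty_read_nonterminating 8))].
    apply prec_serialize_head; [simpl; intuition discriminate|discriminate| |];
      change (serialize [1; 2] _) with (abort_serialization [1; 2] dirty_read_history);
      rewrite dirty_read_serialization.
    + right. unfold aborted. simpl. tauto.
    + unfold in_hist. discriminate.
  - assert (Hd : decidedb dirty_read_program dirty_read_history 1 0 = true)
      by exact (proj2 (decidedb_spec _ _ _ _) dirty_read_write_decided).
    assert (Hview :
      last_use_view (abort_serialization [1; 2] dirty_read_history) [1; 2]
        (view_kind 2 (Nat.eqb 1)) (decidedb dirty_read_program dirty_read_history) =
      [Inv 1 OInit; Res 1 ROk; Inv 1 (OWrite 0 1); Res 1 ROk; Inv 1 OTryC; Res 1 RC;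
       Inv 2 OInit; Res 2 ROk; Inv 2 (ORead 0); Res 2 (RVal 1); Inv 2 OTryA; Res 2 RA]).
    { rewrite dirty_read_serialization. cbn. now rewrite Hd. }
    rewrite Hview. apply legalb_sound. reflexivity.
Qed.

Lemma dirty_read_lu_legal k i :
  lu_legal dirty_read_program (firstn k dirty_read_history)
    (abort_serialization [1; 2] (firstn k dirty_read_history)) i.
Proof.
  destruct (Nat.le_gt_cases 8 k) as [Hk|Hk]; [destruct (Nat.eq_dec i 2) as [->|Hi]|].
  { rewrite firstn_all2 by (simpl; lia). exact dirty_read_reader_lu_legal. }
  all: apply (lu_legal_of_cuts _ _ _ [1; 2] _ (fun _ => false));
    [exact NoDup_dirty_read_tx_ids
    |exact (serialize_blocks _ _ NoDup_dirty_read_tx_ids)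
    |intros j; apply abort_serialization_not_committed, dirty_read_nonterminating
    |discriminate
    |apply legal_view_alone; intros t v Hr; apply In_proj in Hr as [Hr Ht];
     apply In_abort_serialization_read, dirty_read_response in Hr; simpl in Ht; lia].
Qed.

Lemma dirty_read_lu_opaque : lu_opaque dirty_read_program dirty_read_history.
Proof.
  intro k. apply (final_state_of_abort_serialization _ _ [1; 2]).
  - exact NoDup_dirty_read_tx_ids.
  - apply dirty_read_nonterminating.
  - apply dirty_read_tx_ids.
  - apply dirty_read_lu_legal.
Qed.

Theorem mainTheorem16 :
  exists (P : history -> Prop) (H : history),
    program P /\ P H /\ lu_opaque P H /\ ~ ACA H.
Proof.
  exists dirty_read_program, dirty_read_history.
  split; [exact (program_prefixes _ dirty_read_well_formed)|].
  split; [now exists 8|].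
  split; [exact dirty_read_lu_opaque|].
  apply (not_ACA_of_dirty_read _ 1 2 0 1 6 7).
  - discriminate.
  - now exists 2.
  - repeat split; [lia|]. intros m e Hm Hm' _. lia.
  - intros c Hc Hn. do 7 (destruct c as [|c]; [discriminate Hn|]). lia.
Qed.
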